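(* Let $a\ge1$, let $\mathcal{P}$ be either $\mathcal{Q}_{a,a}$ or $\mathcal{U}_a$, and let $\nu$ be any permutation of $[a]$. Define $\mathcal{R}(I)=\sum_{(i,j)\in I}(-1)^{i+j}$ for $I\in J(\mathcal{P})$. Then $\mathcal{R}$ is homomesic for $\mathcal{T}_\nu$ acting on $J(\mathcal{P})$.
   Context: $J(P)$ is the set of order ideals of a finite poset $P$. Toggle: $\sigma_x(I)=I\cup\{x\}$ if $x\notin I$ and $I\cup\{x\}\in J(P)$; $I\setminus\{x\}$ if $x\in I$ and $I\setminus\{x\}\in J(P)$; $I$ otherwise. For a chain $C=\{x_1<\dots<x_m\}$, $\sigma_C=\sigma_{x_1}\circ\cdots\circ\sigma_{x_m}$. $\mathcal{Q}_{a,a}=[a]\times[a]$ with componentwise order and columns $C_c=\{(c,j):j\in[a]\}$; $\mathcal{U}_a=\{(i,j)\in[a]^2: i+j\ge a+1\}$ with componentwise order and columns $C_c=\{(c,j): a+1-c\le j\le a\}$. Comotion: $\mathcal{T}_\nu=\sigma_{C_{\nu(a)}}\circ\cdots\circ\sigma_{C_{\nu(1)}}$. A function on a finite set with a permutation $\tau$ is homomesic if its average over every $\tau$-orbit is the same constant. *)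

From HB Require Import structures.
From mathcomp Require Import all_boot all_order all_algebra all_fingroup.
Set Implicit Arguments. Unset Strict Implicit. Unset Printing Implicit Defensive.
Import GRing.Theory Num.Theory.

(* Ground set [a] x [a], 0-indexed: the pair (i, j) : 'I_a * 'I_a stands for
   the element (i+1, j+1) of the paper. *)
Definition pt (a : nat) := ('I_a * 'I_a)%type.

Definition ple (a : nat) (x y : pt a) : bool := (x.1 <= y.1)%N && (x.2 <= y.2)%N.

Definition Qaa (a : nat) : {set pt a} := [set: pt a].

(* U_a = {(i,j) : i + j >= a + 1} (1-indexed), i.e. i0 + j0 >= a - 1 (0-indexed) *)
Definition Ua (a : nat) : {set pt a} := [set x : pt a | (a.-1 <= x.1 + x.2)%N].

Definition is_ideal (a : nat) (P : {set pt a}) (I : {set pt a}) : bool :=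
  (I \subset P) &&
  [forall x in P, forall y in I, ple x y ==> (x \in I)].

Definition toggle (a : nat) (P : {set pt a}) (x : pt a) (I : {set pt a})
  : {set pt a} :=
  if x \notin I then (if is_ideal P (x |: I) then x |: I else I)
  else (if is_ideal P (I :\ x) then I :\ x else I).

(* column C_c = {(c, j) in P}, listed increasingly x_1 < ... < x_m;
   sigma_C = sigma_{x_1} o ... o sigma_{x_m} *)
Definition col_list (a : nat) (P : {set pt a}) (c : 'I_a) : seq (pt a) :=
  [seq x <- [seq (c, j) | j <- enum 'I_a] | x \in P].

Definition col_toggle (a : nat) (P : {set pt a}) (c : 'I_a) (I : {set pt a})
  : {set pt a} :=
  foldr (toggle P) I (col_list P c).

(* comotion T_nu = sigma_{C_{nu(a)}} o ... o sigma_{C_{nu(1)}} *)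
Definition comotion (a : nat) (P : {set pt a}) (nu : {perm 'I_a})
  (I : {set pt a}) : {set pt a} :=
  foldl (fun J i => col_toggle P (nu i) J) I (enum 'I_a).

(* R(I) = sum_{(i,j) in I} (-1)^(i+j)  (parity unchanged by 0-indexing) *)
Definition Rstat (a : nat) (I : {set pt a}) : int :=
  (\sum_(x in I) (-1) ^+ (x.1 + x.2))%R.

Definition homomesic (T : finType) (S : pred T) (tau : T -> T) (f : T -> int) :=
  exists c : rat, forall x, S x ->
    ((\sum_(y <- fingraph.orbit tau x) (f y)%:~R) / (size (fingraph.orbit tau x))%:R = c)%R.

From mathcomp Require Import all_boot all_order all_algebra all_fingroup.
From mathcomp Require Import zify.
Set Implicit Arguments. Unset Strict Implicit. Unset Printing Implicit Defensive.
Import GRing.Theory Num.Theory.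

(* Both posets are staircases: column c is {(c, j) : lo c <= j} for a non-increasing lo, so an
   order ideal is given by non-increasing column heights h c in [lo c, a].  Toggling column c
   raises h c by one if column c - 1 allows it, and otherwise lowers it to max (lo c) (h (c + 1)).
   The contribution of column c to R depends only on the parity of h c - lo c, and in each case
   the contributions of column c before and after toggling add up to D c U h - D (c + 1) h' H,
   a difference of potentials of the boundaries between consecutive columns (U and H are the
   heights of the neighbours at the moment column c is toggled).  Summing over c, R I + R (T I) is
   a constant K0 - Ka plus one term per inner boundary; according to which of the two adjacent
   columns nu toggles first, that term vanishes or has the form G (T I) - G I, so it sums to zero
   along every orbit.  Hence twice the orbit sum of R is the orbit size times K0 - Ka. *)

Lemma orbit_sub (T : finType) (S : {pred T}) (f : T -> T) x :
  {homo f : y / y \in S} -> x \in S -> {subset fingraph.orbit f x <= S}.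
Proof. by move=> fS xS y /trajectP[k _ ->]; elim: k => //= k /fS. Qed.

Lemma sum_orbit_shift (T : finType) (S : {pred T}) (f : T -> T) (V : nmodType)
    (G : T -> V) x :
  {homo f : y / y \in S} -> {in S &, injective f} -> x \in S ->
  (\sum_(y <- fingraph.orbit f x) G (f y) = \sum_(y <- fingraph.orbit f x) G y)%R.
Proof.
move=> fS finj xS; rewrite -(big_map f xpredT G); apply: perm_big.
have uniq_fO : uniq (map f (fingraph.orbit f x)).
  by rewrite (map_inj_in_uniq (sub_in2 (orbit_sub fS xS) finj)) fingraph.orbit_uniq.
have fO : {subset map f (fingraph.orbit f x) <= fingraph.orbit f x}.
  by move=> _ /mapP[y yO ->]; exact: fingraph.mem_orbit.
have [_ eqO] := uniq_min_size uniq_fO fO (eq_leq (esym (size_map _ _))).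
by apply: uniq_perm; rewrite ?fingraph.orbit_uniq.
Qed.

Section Homomesy.
Local Open Scope ring_scope.

Lemma homomesic_orbit_sums (T : finType) (S : pred T) (tau : T -> T)
    (f : T -> int) (m : nat) (k : int) :
  (0 < m)%N ->
  (forall x, S x ->
     m%:R * \sum_(y <- fingraph.orbit tau x) f y
      = (size (fingraph.orbit tau x))%:R * k) ->
  homomesic S tau f.
Proof.
move=> m_gt0 orbit_sum; exists (k%:~R / m%:R : rat) => x Sx.
set O := fingraph.orbit tau x.
have O_gt0 : (size O)%:R != 0 :> rat.
  by rewrite pnatr_eq0 -lt0n size_orbit fingraph.order_gt0.
apply/eqP; rewrite -(big_morph _ (@intrD _) (erefl 0%:~R)) eqr_div // ?pnatr_eq0 -?lt0n //.
by rewrite !pmulrn -!intrM eqr_int -!natz mulrC orbit_sum // mulrC.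
Qed.

End Homomesy.

Section Toggles.
Variables (a : nat) (P : {set pt a}).
Implicit Types (I J : {set pt a}) (x y : pt a).

Lemma ideal_sub I x : is_ideal P I -> x \in I -> x \in P.
Proof. by case/andP=> /subsetP sIP _ /sIP. Qed.

Lemma ideal_down I x y : is_ideal P I -> x \in P -> y \in I -> ple x y -> x \in I.
Proof.
by case/andP=> _ /forall_inP idealI xP yI; move/forall_inP/(_ y yI)/implyP: (idealI x xP).
Qed.

Lemma is_idealI I : {subset I <= P} ->
  (forall x y, x \in P -> y \in I -> ple x y -> x \in I) -> is_ideal P I.
Proof.
move=> sIP downI; apply/andP; split; first exact/subsetP.
by apply/forall_inP=> x xP; apply/forall_inP=> y yI; apply/implyP; apply: downI.
Qed.

Lemma toggle_ideal I x : is_ideal P I -> is_ideal P (toggle P x I).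
Proof. by rewrite /toggle => idI; case: ifP => _; case: ifP. Qed.

Lemma in_toggle I x y : y != x -> (y \in toggle P x I) = (y \in I).
Proof.
move=> yx; rewrite /toggle; case: ifP => _; case: ifP => _ //.
  by rewrite in_setU1 (negbTE yx).
by rewrite in_setD1 yx.
Qed.

Lemma toggleK I x : is_ideal P I -> toggle P x (toggle P x I) = I.
Proof.
move=> idI; have [xI | xNI] := boolP (x \in I).
- have -> : toggle P x I = if is_ideal P (I :\ x) then I :\ x else I by rewrite /toggle xI.
  case: ifP => idK; last by rewrite /toggle xI idK.
  by rewrite /toggle !inE eqxx /= setD1K // idI.
- have -> : toggle P x I = if is_ideal P (x |: I) then x |: I else I by rewrite /toggle xNI.
  case: ifP => idK; last by rewrite /toggle xNI idK.
  by rewrite /toggle setU11 /= setU1K // idI.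
Qed.

Lemma foldr_toggle_ideal s I : is_ideal P I -> is_ideal P (foldr (toggle P) I s).
Proof. by move=> idI; elim: s => //= x s; exact: toggle_ideal. Qed.

Lemma foldr_toggle_inj s : {in is_ideal P &, injective (fun I => foldr (toggle P) I s)}.
Proof.
move=> I J idI idJ /=; elim: s => //= x s IH eq_x; apply: IH.
by rewrite -(toggleK x (foldr_toggle_ideal s idI)) eq_x toggleK ?foldr_toggle_ideal.
Qed.

Lemma foldl_col_toggle_ideal (f : 'I_a -> 'I_a) s I : is_ideal P I ->
  is_ideal P (foldl (fun J i => col_toggle P (f i) J) I s).
Proof. by elim: s I => //= i s IH I idI; exact/IH/foldr_toggle_ideal. Qed.

Variable nu : {perm 'I_a}.

Lemma comotion_ideal I : is_ideal P I -> is_ideal P (comotion P nu I).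
Proof. exact: foldl_col_toggle_ideal. Qed.

Lemma comotion_inj : {in is_ideal P &, injective (comotion P nu)}.
Proof.
rewrite /comotion; elim: (enum _) => //= i s IH I J idI idJ /IH eqIJ.
by apply: (foldr_toggle_inj idI idJ); apply: eqIJ; exact: foldr_toggle_ideal.
Qed.

End Toggles.

Lemma sum_sign_nat (l h : nat) : l <= h ->
  (\sum_(l <= j < h) (-1) ^+ j = (-1) ^+ l * (odd (h - l))%:Z :> int)%R.
Proof.
move=> lh; have [k ->] : exists k, h = l + k by exists (h - l); rewrite subnKC.
rewrite addKn; elim: k => [|k IH]; first by rewrite addn0 big_geq // mulr0.
rewrite addnS big_nat_recr ?leq_addr //= IH exprD -mulrDr -[((-1) ^+ k)%R]signr_odd /=.
by case: (odd k); rewrite /= ?expr1 ?expr0 ?addrN ?add0r.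
Qed.

Section Staircase.
Variable n : nat.
Local Notation a := n.+1.
Variables (P : {set pt a}) (lo : nat -> nat).
Hypothesis mem_P : forall x : pt a, (x \in P) = (lo x.1 <= x.2).
Hypothesis lo_nonincr : forall c c', c <= c' -> lo c' <= lo c.
Hypothesis lo_le : forall c, lo c <= a.
Implicit Types (I J K : {set pt a}) (x y : pt a).

Definition height I (c : nat) : nat :=
  maxn (lo c) (\max_(x in I | x.1 == c :> nat) x.2.+1).

Definition left_height I (c : nat) : nat := if c == 0 then a else height I c.-1.

Definition floor_height I (c : nat) : nat := maxn (lo c) (height I c.+1).

Lemma pt_eqE x y : (x == y) = (x.1 == y.1 :> nat) && (x.2 == y.2 :> nat).
Proof. by case: x y => [x1 x2] [y1 y2]; rewrite xpair_eqE. Qed.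

Lemma height_ge I c : lo c <= height I c.
Proof. exact: leq_maxl. Qed.

Lemma height_le I c : height I c <= a.
Proof. by rewrite geq_max lo_le; apply/bigmax_leqP => x _; exact: ltn_ord. Qed.

Lemma height_out I c : a <= c -> height I c = lo c.
Proof.
move=> ac; rewrite /height big_pred0 ?maxn0 // => x.
by apply/andP=> -[_ /eqP ex]; move: (ltn_ord x.1); rewrite ex; lia.
Qed.

Lemma eq_height I J c :
  (forall x, x.1 = c :> nat -> (x \in I) = (x \in J)) -> height I c = height J c.
Proof.
move=> eqIJ; rewrite /height; congr maxn; apply: eq_bigl => x /=.
by case: (eqVneq (x.1 : nat) c) => [/eqIJ ->|]; rewrite ?andbT ?andbF.
Qed.

Lemma mem_ideal I x : is_ideal P I -> (x \in I) = (lo x.1 <= x.2 < height I x.1).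
Proof.
move=> idI; apply/idP/idP => [xI | /andP[xP x_lt]].
  rewrite -mem_P (ideal_sub idI xI) /= (leq_trans _ (leq_maxr _ _)) //.
  by apply: (@leq_bigmax_cond _ (fun y => (y \in I) && (y.1 == x.1 :> nat))); rewrite xI eqxx.
have [y /and3P[yI /eqP y1 xy2]] :
    exists y, [&& y \in I, y.1 == x.1 :> nat & x.2 <= y.2].
  apply/existsP; apply: contraLR x_lt; rewrite negb_exists => /forallP yNI.
  rewrite -leqNgt geq_max xP; apply/bigmax_leqP => y /andP[yI y1].
  by move: (yNI y); rewrite yI y1 -ltnNge.
by apply: (ideal_down idI _ yI); rewrite ?mem_P // /ple y1 leqnn.
Qed.

Lemma height_nonincr I c c' : is_ideal P I -> c <= c' -> height I c' <= height I c.
Proof.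
move=> idI cc'; rewrite {1}/height geq_max (leq_trans (lo_nonincr cc') (height_ge _ _)).
apply/bigmax_leqP => y /andP[yI /eqP y1].
have ca : c < a by rewrite (leq_ltn_trans cc') // -y1.
case: (leqP (lo c) y.2) => [y_ge | y_lt]; last exact: leq_trans y_lt (height_ge _ _).
have : ((Ordinal ca, y.2) : pt a) \in I.
  by apply: (ideal_down idI _ yI); rewrite ?mem_P // /ple /= y1 cc' leqnn.
by rewrite mem_ideal //= => /andP[].
Qed.

Lemma height_col K (c : 'I_a) m : is_ideal P K -> lo c <= m <= a ->
  (forall j : 'I_a, ((c, j) \in K) = (lo c <= j < m)) -> height K c = m.
Proof.
move=> idK /andP[lo_m ma] colK.
case: (ltngtP (height K c) m) => // [hm | mh].
- have ha : height K c < a by lia.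
  move: (colK (Ordinal ha)); rewrite mem_ideal //= ltnn hm andbF.
  by move/esym; rewrite andbT; move: (height_ge K c); lia.
- have ja : m < a by move: (height_le K c); lia.
  by move: (colK (Ordinal ja)); rewrite mem_ideal //= ltnn mh lo_m andbF.
Qed.

Lemma height_bounds I c : is_ideal P I ->
  [/\ lo c <= floor_height I c, floor_height I c <= height I c,
      height I c <= left_height I c & left_height I c <= a].
Proof.
move=> idI; rewrite /floor_height /left_height geq_max leq_maxl height_ge.
rewrite height_nonincr //; case: eqP => _; rewrite ?height_le ?height_nonincr //.
exact: leq_pred.
Qed.

Lemma ideal_setU1_height I x : is_ideal P I -> x \notin I -> is_ideal P (x |: I) ->
  x.2 = height I x.1 :> nat /\ height I x.1 < left_height I x.1.
Proof.
move=> idI xNI idK.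
have x_ge : lo x.1 <= x.2 by rewrite -mem_P (ideal_sub idK (setU11 _ _)).
have x2E : x.2 = height I x.1 :> nat.
  case: (ltngtP x.2 (height I x.1)) => // [x_lt | x_gt].
    by move: xNI; rewrite mem_ideal // x_ge x_lt.
  have ha : height I x.1 < a by move: (ltn_ord x.2); lia.
  have : ((x.1, Ordinal ha) : pt a) \in x |: I.
    apply: (ideal_down idK _ (setU11 _ _)); first by rewrite mem_P /= height_ge.
    by rewrite /ple /= leqnn ltnW.
  by rewrite in_setU1 pt_eqE /= eqxx (ltn_eqF x_gt) mem_ideal //= ltnn andbF.
split=> //; rewrite /left_height -x2E.
case: eqP => [_ | x1_neq0]; first exact: ltn_ord.
have ca : x.1.-1 < a by move: (ltn_ord x.1); lia.
case: (leqP (lo x.1.-1) x.2) => [x_ge' | x_lt]; last exact: leq_trans x_lt (height_ge _ _).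
have : ((Ordinal ca, x.2) : pt a) \in x |: I.
  apply: (ideal_down idK _ (setU11 _ _)); first by rewrite mem_P.
  by rewrite /ple /= leqnn leq_pred.
rewrite in_setU1 pt_eqE /= mem_ideal //=.
have -> : (x.1.-1 == x.1 :> nat) = false by apply/negbTE; lia.
by case/andP.
Qed.

Lemma ideal_setU1 I x : is_ideal P I -> x \in P -> x.2 = height I x.1 :> nat ->
  height I x.1 < left_height I x.1 -> is_ideal P (x |: I).
Proof.
move=> idI xP x2E x_lt_left; apply: is_idealI.
  by move=> z; rewrite in_setU1 => /predU1P[-> // | /(ideal_sub idI)].
move=> z y zP; rewrite !in_setU1 => /predU1P[-> {y} | yI] zy; last first.
  by rewrite (ideal_down idI zP yI zy) orbT.
case: eqP => //= zx; move: zy => /andP[z1 z2].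
rewrite mem_ideal // -mem_P zP /=.
case: (ltngtP z.1 x.1) => [z1_lt | z1_gt | z1E]; first last.
- have z2x : z.2 != x.2 :> nat.
    by apply: contra_not_neq zx => z2E; apply/eqP; rewrite pt_eqE z1E z2E !eqxx.
  by rewrite z1E -x2E ltn_neqAle z2x.
- by move: z1; rewrite leqNgt z1_gt.
move: x_lt_left; rewrite /left_height; case: eqP => [x10 | _]; first by move: z1_lt; rewrite x10.
have z1_le : z.1 <= x.1.-1 by lia.
by have := height_nonincr idI z1_le; lia.
Qed.

Lemma is_ideal_setU1 I x : is_ideal P I -> x \in P -> x \notin I ->
  is_ideal P (x |: I) = (x.2 == height I x.1 :> nat) && (height I x.1 < left_height I x.1).
Proof.
move=> idI xP xNI; apply/idP/andP => [/(ideal_setU1_height idI xNI)[-> ->] // | [/eqP]].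
exact: ideal_setU1.
Qed.

Lemma ideal_setD1_height I x : is_ideal P I -> x \in I -> is_ideal P (I :\ x) ->
  x.2.+1 = height I x.1 /\ floor_height I x.1 <= x.2.
Proof.
move=> idI xI idK; have /andP[x_ge x_lt] : lo x.1 <= x.2 < height I x.1 by rewrite -mem_ideal.
have xNK : x \notin I :\ x by rewrite in_setD1 eqxx.
have x2E : x.2.+1 = height I x.1.
  case: (ltngtP x.2.+1 (height I x.1)) => // [x_lt' | ]; last by lia.
  have ja : x.2.+1 < a by move: (height_le I x.1); lia.
  have : ((x.1, Ordinal ja) : pt a) \in I :\ x.
    rewrite in_setD1 pt_eqE /= eqxx /= (gtn_eqF (ltnSn _)) mem_ideal //= x_lt' andbT.
    exact: leqW.
  move/(ideal_down idK (ideal_sub idI xI)); rewrite /ple /= leqnn leqnSn => /(_ isT).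
  by rewrite (negbTE xNK).
split=> //; rewrite /floor_height geq_max x_ge.
case: (ltnP x.1.+1 a) => [ca | ac]; last first.
  by rewrite height_out // (leq_trans (lo_nonincr (leqnSn _))).
rewrite leqNgt; apply/negP => x_lt_next.
have : ((Ordinal ca, x.2) : pt a) \in I :\ x.
  rewrite in_setD1 pt_eqE /= eqxx andbT mem_ideal //= x_lt_next andbT.
  by rewrite (gtn_eqF (ltnSn _)) (leq_trans (lo_nonincr (leqnSn _))).
move/(ideal_down idK (ideal_sub idI xI)); rewrite /ple /= leqnn leqnSn => /(_ isT).
by rewrite (negbTE xNK).
Qed.

Lemma ideal_setD1 I x : is_ideal P I -> x \in I -> x.2.+1 = height I x.1 ->
  floor_height I x.1 <= x.2 -> is_ideal P (I :\ x).
Proof.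
move=> idI xI x2E floor_le; apply: is_idealI.
  by move=> z /setD1P[_ /(ideal_sub idI)].
move=> z y zP /setD1P[yx yI] zy; rewrite in_setD1 (ideal_down idI zP yI zy) andbT.
apply: contra_neq yx => zx; subst z; move: zy => /andP[x1y x2y].
move: (yI); rewrite mem_ideal // => /andP[_ y_lt].
case: (ltngtP x.1 y.1) => [x1_lt | x1_gt | x1E].
- have := height_nonincr idI x1_lt; move: floor_le; rewrite /floor_height geq_max.
  by move=> /andP[_ ? ?]; exfalso; lia.
- by move: x1y; rewrite leqNgt x1_gt.
- apply/eqP; rewrite pt_eqE x1E eqxx /= eqn_leq x2y /=.
  by rewrite andbT -ltnS x2E x1E.
Qed.

Lemma is_ideal_setD1 I x : is_ideal P I -> x \in I ->
  is_ideal P (I :\ x) = (x.2.+1 == height I x.1) && (floor_height I x.1 <= x.2).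
Proof.
move=> idI xI; apply/idP/andP => [/(ideal_setD1_height idI xI)[-> ->] // | [/eqP]].
exact: ideal_setD1.
Qed.

Lemma height_toggle I x : is_ideal P I -> x \in P ->
  height (toggle P x I) x.1 =
  if x.2 < height I x.1 then
    if (x.2.+1 == height I x.1) && (floor_height I x.1 <= x.2) then x.2 : nat else height I x.1
  else if (x.2 == height I x.1 :> nat) && (height I x.1 < left_height I x.1) then x.2.+1
  else height I x.1.
Proof.
move=> idI xP; have x_ge : lo x.1 <= x.2 by rewrite -mem_P.
have xIE : (x \in I) = (x.2 < height I x.1) by rewrite mem_ideal // x_ge.
rewrite /toggle xIE; case: ltnP => [x_lt | x_ge'] /=.
- have xI : x \in I by rewrite xIE.
  rewrite -is_ideal_setD1 //; case: ifP => // idK.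
  have [x2E _] := ideal_setD1_height idI xI idK.
  apply: height_col => // [|j]; first by rewrite x_ge ltnW.
  by rewrite in_setD1 pt_eqE /= eqxx /= mem_ideal //= -x2E ltnS ltn_neqAle andbCA.
- have xNI : x \notin I by rewrite xIE -leqNgt.
  rewrite -is_ideal_setU1 //; case: ifP => // idK.
  have [x2E _] := ideal_setU1_height idI xNI idK.
  apply: height_col => // [|j]; first by rewrite (leq_trans x_ge) //= ltn_ord.
  rewrite in_setU1 pt_eqE /= eqxx /= mem_ideal //= -x2E ltnS.
  by case: eqVneq => [-> | ne]; rewrite ?x_ge ?leqnn // ltn_neqAle ne.
Qed.

Lemma height_foldr_toggle I s d : all (fun x : pt a => x.1 != d :> nat) s ->
  height (foldr (toggle P) I s) d = height I d.
Proof.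
move=> /allP s_d; apply: eq_height => x x1d; elim: s s_d => //= y s IH s_d.
rewrite in_toggle ?IH // => [z zs | ]; first by apply: s_d; rewrite inE zs orbT.
by apply: contraTneq (s_d y (mem_head _ _)) => <-; rewrite x1d eqxx.
Qed.

Lemma mem_col_list (c : 'I_a) x : x \in col_list P c -> x.1 = c.
Proof. by rewrite mem_filter => /andP[_ /mapP[j _ ->]]. Qed.

Lemma height_col_toggle_other I (c : 'I_a) (d : nat) : d != c ->
  height (col_toggle P c I) d = height I d.
Proof.
move=> dc; apply: height_foldr_toggle; apply/allP => x /mem_col_list ->.
by rewrite eq_sym.
Qed.

Definition col_step (h U L : nat) : nat := if h < U then h.+1 else L.

(* New height of a column of height h, with left bound U and floor L, after toggling its cells
   in rows m, ..., a - 1, top row first. *)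
Definition top_toggle_height (m h U L : nat) : nat :=
  if h < U then (if m <= h then h.+1 else h) else maxn L (minn h m).

Lemma col_listE (c : 'I_a) :
  col_list P c = [seq ((c, inord j) : pt a) | j <- iota (lo c) (a - lo c)].
Proof.
have enumE : enum 'I_a = [seq inord j | j <- iota 0 a].
  apply: (@inj_map _ _ val val_inj); rewrite val_enum_ord -map_comp map_id_in // => j.
  by rewrite mem_iota /= => ja; rewrite inordK.
have iotaE : iota 0 a = iota 0 (lo c) ++ iota (lo c) (a - lo c) by rewrite -iotaD subnKC.
rewrite /col_list enumE -map_comp filter_map iotaE filter_cat.
rewrite (@eq_in_filter _ _ pred0) ?filter_pred0 => [|j]; last first.
  by rewrite mem_iota /= => j_lt; rewrite mem_P /= inordK; move: (lo_le c); lia.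
rewrite (@eq_in_filter _ _ predT) ?filter_predT // => j.
by rewrite mem_iota /= => j_lt; rewrite mem_P /= inordK; move: (lo_le c); lia.
Qed.

Lemma height_toggle_top I (c : 'I_a) k : is_ideal P I -> k <= a - lo c ->
  height (foldr (toggle P) I [seq ((c, inord j) : pt a) | j <- iota (a - k) k]) c =
  top_toggle_height (a - k) (height I c) (left_height I c) (floor_height I c).
Proof.
move=> idI; have [b1 b2 b3 b4] := height_bounds c idI.
elim: k => [_ | k IH k_le].
  by rewrite subn0 /= /top_toggle_height; repeat case: ifP => ?; lia.
set J := foldr _ I [seq _ | j <- iota (a - k) k] in IH.
have J_other (d : nat) : d != c -> height J d = height I d.
  move=> dc; apply: height_foldr_toggle; rewrite all_map; apply/allP => j _ /=.
  by rewrite eq_sym.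
have ka : k < a by lia.
have ->: iota (a - k.+1) k.+1 = a - k.+1 :: iota (a - k) k by rewrite /= subnSK.
rewrite /= -/J (height_toggle (foldr_toggle_ideal _ idI)) /=; last by rewrite mem_P /= inordK; lia.
have -> : left_height J c = left_height I c.
  by rewrite /left_height; case: eqP => // c0; apply: J_other; lia.
have -> : floor_height J c = floor_height I c.
  by rewrite /floor_height J_other //; lia.
rewrite inordK; last lia.
rewrite IH /top_toggle_height; last lia.
move: (a - k.+1) (subnSK ka) b1 b2 b3 b4 => m <-.
move: (height I c) (left_height I c) (floor_height I c) => h U L b1 b2 b3 b4.
case: (ltnP h U) => hU; [case: (ltngtP m h) => hm | ]; by repeat case: ifP => ?; lia.
Qed.

Lemma height_col_toggle I (c : 'I_a) : is_ideal P I ->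
  height (col_toggle P c I) c = col_step (height I c) (left_height I c) (floor_height I c).
Proof.
move=> idI; have [b1 b2 b3 b4] := height_bounds c idI.
rewrite /col_toggle col_listE -{1}(subKn (lo_le c)) height_toggle_top ?subKn //.
by rewrite /top_toggle_height /col_step; repeat case: ifP => ?; lia.
Qed.

Section Comotion.
Variable nu : {perm 'I_a}.
Local Notation T := (comotion P nu).
Local Notation col_steps := (foldl (fun J i => col_toggle P (nu i) J)).

Definition toggled_before (d c : nat) : bool :=
  (d < a) && ((nu^-1)%g (inord d) < (nu^-1)%g (inord c)).

(* When T toggles column c, the column d it sees has already been toggled iff nu lists d first. *)
Definition seen_by I (d c : nat) : {set pt a} := if toggled_before d c then T I else I.

Definition pre_state I (c : 'I_a) : {set pt a} :=
  col_steps I (take ((nu^-1)%g c) (enum 'I_a)).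

Lemma height_col_steps I s (d : nat) : all (fun i => nu i != d :> nat) s ->
  height (col_steps I s) d = height I d.
Proof.
elim: s I => //= i s IH I /andP[nu_i_d /IH ->].
by apply: height_col_toggle_other; rewrite eq_sym.
Qed.

Lemma mem_take_enum (k i : 'I_a) : (i \in take k (enum 'I_a)) = (i < k).
Proof.
rewrite -(mem_map val_inj) map_take val_enum_ord take_iota mem_iota /=.
by rewrite ltn_min ltn_ord andbT.
Qed.

Lemma mem_drop_enum (k i : 'I_a) : (i \in drop k.+1 (enum 'I_a)) = (k < i).
Proof.
rewrite -(mem_map val_inj) map_drop val_enum_ord drop_iota mem_iota /=.
by move: (ltn_ord i) (ltn_ord k); lia.
Qed.

Lemma enum_ord_split (k : 'I_a) :
  enum 'I_a = take k (enum 'I_a) ++ k :: drop k.+1 (enum 'I_a).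
Proof.
by rewrite -{1}(cat_take_drop k (enum 'I_a)) (drop_nth k) ?size_enum_ord // nth_ord_enum.
Qed.

Lemma nu_inord_eq (i : 'I_a) (d : nat) :
  (nu i == d :> nat) = (i == (nu^-1)%g (inord d)) && (d < a).
Proof.
apply/eqP/andP => [nu_i_d | [/eqP-> da]]; last by rewrite permKV inordK.
by rewrite -nu_i_d ltn_ord inord_val permK eqxx.
Qed.

Lemma comotion_split I (c : 'I_a) :
  T I = col_steps (col_toggle P c (pre_state I c)) (drop ((nu^-1)%g c).+1 (enum 'I_a)).
Proof. by rewrite /comotion {1}(enum_ord_split ((nu^-1)%g c)) foldl_cat /= permKV. Qed.

Lemma height_pre_state_other I (c : 'I_a) (d : nat) : d != c ->
  height (pre_state I c) d = height (seen_by I d c) d.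
Proof.
move=> dc; case: (ltnP d a) => [da | ad]; last by rewrite !height_out.
rewrite /seen_by /toggled_before da inord_val /=; case: ltnP => [before | after].
  rewrite (comotion_split I c) height_col_steps ?height_col_toggle_other //.
  apply/allP => i; rewrite mem_drop_enum nu_inord_eq => lt_i.
  by apply/negP => /andP[/eqP ei _]; move: before lt_i; rewrite -ei; lia.
apply: height_col_steps; apply/allP => i; rewrite mem_take_enum nu_inord_eq => lt_i.
by apply/negP => /andP[/eqP ei _]; move: after lt_i; rewrite -ei; lia.
Qed.

Lemma height_pre_state I (c : 'I_a) : height (pre_state I c) c = height I c.
Proof.
apply: height_col_steps; apply/allP => i; rewrite mem_take_enum => lt_i.
by apply: contraTneq lt_i => /val_inj <-; rewrite permK ltnn.
Qed.

Lemma height_comotion I (c : 'I_a) : is_ideal P I ->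
  height (T I) c = col_step (height I c)
    (left_height (pre_state I c) c) (floor_height (pre_state I c) c).
Proof.
move=> idI; rewrite (comotion_split I c) height_col_steps.
  by rewrite height_col_toggle ?height_pre_state //; exact: foldl_col_toggle_ideal.
apply/allP => i; rewrite mem_drop_enum => lt_i.
by apply: contraTneq lt_i => /val_inj <-; rewrite permK ltnn.
Qed.

End Comotion.

Local Open Scope ring_scope.

Definition col_weight (c h : nat) : int := (-1) ^+ c * \sum_(lo c <= j < h) (-1) ^+ j.

Lemma col_weightE c h : (lo c <= h)%N ->
  col_weight c h = (-1) ^+ (c + lo c) * (odd (h - lo c))%:Z.
Proof. by move=> lo_h; rewrite /col_weight sum_sign_nat // exprD mulrA. Qed.

Lemma Rstat_heights I : is_ideal P I -> Rstat I = \sum_(c < a) col_weight c (height I c).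
Proof.
move=> idI; transitivity (\sum_(c < a) \sum_(j < a)
    (if ((c, j) : pt a) \in I then (-1) ^+ (c + j) else 0 : int)).
  by rewrite pair_big /Rstat big_mkcond /=; apply: eq_bigr => -[i j] _.
apply: eq_bigr => c _; rewrite /col_weight big_geq_mkord (big_ord_widen_cond a) ?height_le //.
rewrite big_distrr [RHS]big_mkcond /=; apply: eq_bigr => j _.
by rewrite mem_ideal //= exprD; case: ifP; rewrite ?mulr0.
Qed.

Section BoundaryPotential.
Variable nu : {perm 'I_a}.
Local Notation T := (comotion P nu).
(* [D c v w] is a potential of the boundary between column c - 1, of height v, and column c, of
   height w; the virtual columns -1 and a have heights a and lo a. *)
Variable D : nat -> nat -> nat -> int.
Variables K0 Ka : int.
Hypothesis col_weight_pair : forall (c : 'I_a) h U Hn,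
  (lo c <= h <= U)%N -> (U <= a)%N -> (c == 0 :> nat) ==> (U == a) ->
  (Hn <= h)%N -> (lo c.+1 <= Hn)%N -> (c.+1 == a) ==> (Hn == lo a) ->
  col_weight c h + col_weight c (col_step h U (maxn (lo c) Hn)) =
  D c U h - D c.+1 (col_step h U (maxn (lo c) Hn)) Hn.
Hypothesis D_first : forall h, (lo 0 <= h <= a)%N -> D 0 a h = K0.
Hypothesis D_last : forall v, (v <= a)%N -> D a v (lo a) = Ka.

Lemma col_weight_comotion I (c : 'I_a) : is_ideal P I ->
  col_weight c (height I c) + col_weight c (height (T I) c) =
  D c (left_height (pre_state nu I c) c) (height I c)
  - D c.+1 (height (T I) c) (height (pre_state nu I c) c.+1).
Proof.
move=> idI; set J := pre_state nu I c.
have idJ : is_ideal P J by exact: foldl_col_toggle_ideal.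
have [_ J_floor J_left J_left_le] := height_bounds c idJ.
rewrite height_pre_state in J_floor J_left.
move: J_floor; rewrite /floor_height geq_max => /andP[_ J_next].
rewrite height_comotion //; apply: col_weight_pair => //.
- by rewrite height_ge J_left.
- by apply/implyP => /eqP c0; rewrite /left_height c0.
- exact: height_ge.
- by apply/implyP => /eqP ca; rewrite ca height_out.
Qed.

Definition boundary_term I (c : nat) : int :=
  D c.+1 (height (seen_by nu I c c.+1) c) (height I c.+1)
  - D c.+1 (height (T I) c) (height (seen_by nu I c.+1 c) c.+1).

Lemma Rstat_add_comotion I : is_ideal P I ->
  Rstat I + Rstat (T I) = K0 - Ka + \sum_(c < n) boundary_term I c.
Proof.
move=> idI; rewrite !Rstat_heights ?comotion_ideal // -big_split /=.
rewrite (eq_bigr _ (fun c _ => col_weight_comotion c idI)) sumrB.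
rewrite big_ord_recl big_ord_recr /= D_first ?height_ge ?height_le //.
rewrite (height_out _ (leqnn a)) D_last ?height_le // /boundary_term sumrB.
have -> : \sum_(i < n) D (bump 0 i) (left_height (pre_state nu I (lift ord0 i)) (bump 0 i))
    (height I (bump 0 i)) = \sum_(i < n) D i.+1 (height (seen_by nu I i i.+1) i) (height I i.+1).
  apply: eq_bigr => i _; rewrite /bump add1n /left_height /= height_pre_state_other //.
  by rewrite /= /bump add1n neq_ltn ltnSn.
have -> : \sum_(i < n) D i.+1 (height (T I) i)
      (height (pre_state nu I (widen_ord (leqnSn n) i)) i.+1)
    = \sum_(i < n) D i.+1 (height (T I) i) (height (seen_by nu I i.+1 i) i.+1).
  by apply: eq_bigr => i _; rewrite height_pre_state_other //= gtn_eqF.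
by rewrite opprD [RHS]addrACA [- Ka + _]addrC.
Qed.

Lemma toggled_before_swap (c : nat) : (c.+1 < a)%N ->
  toggled_before nu c c.+1 = ~~ toggled_before nu c.+1 c.
Proof.
move=> ca; rewrite /toggled_before ca (ltnW ca) /= -leqNgt ltn_neqAle andb_idl // => _.
rewrite (inj_eq val_inj) (inj_eq perm_inj) -(inj_eq val_inj) /= !inordK ?(ltnW ca) //.
by rewrite neq_ltn ltnSn.
Qed.

Lemma sum_orbit_boundary_term I (c : nat) : is_ideal P I -> (c < n)%N ->
  \sum_(J <- fingraph.orbit T I) boundary_term J c = 0.
Proof.
move=> idI cn; rewrite /boundary_term /seen_by toggled_before_swap //.
case: (toggled_before nu c.+1 c) => /=; last by rewrite big1 // => J _; rewrite subrr.
rewrite sumrB (@sum_orbit_shift _ (is_ideal P) _ _ (fun J => D c.+1 (height J c) (height J c.+1)))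
  ?subrr //; [exact: comotion_ideal | exact: comotion_inj].
Qed.

Lemma Rstat_orbit_sum I : is_ideal P I ->
  2%:R * \sum_(J <- fingraph.orbit T I) Rstat J = (size (fingraph.orbit T I))%:R * (K0 - Ka).
Proof.
move=> idI; have orbit_ideal := orbit_sub (@comotion_ideal _ P nu) idI.
rewrite mulr_natl mulr2n.
rewrite -{2}(sum_orbit_shift (@Rstat a) (@comotion_ideal _ P nu) (@comotion_inj _ P nu) idI).
rewrite -big_split /= big_seq (eq_bigr _ (fun J JO => Rstat_add_comotion (orbit_ideal J JO))).
rewrite -big_seq big_split /= [X in _ + X]exchange_big [X in _ + X]big1 ?addr0 => [|c _].
  by rewrite big_const_seq count_predT iter_addr_0 mulr_natl.
exact: sum_orbit_boundary_term idI (ltn_ord c).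
Qed.

Lemma homomesic_Rstat : homomesic (is_ideal P) T (@Rstat a).
Proof. by apply: (@homomesic_orbit_sums _ _ _ _ 2 (K0 - Ka)) => // I; exact: Rstat_orbit_sum. Qed.

End BoundaryPotential.
End Staircase.

Local Open Scope ring_scope.

Lemma sign_oddE k : (-1) ^+ k = (if odd k then -1 else 1) :> int.
Proof. by rewrite -signr_odd; case: (odd k). Qed.

Section Square.
Variable n : nat.
Local Notation a := n.+1.
Local Notation lo := (fun _ : nat => 0%N).

Definition square_boundary (c v w : nat) : int :=
  (-1) ^+ c * (odd (if v == w then w else a - c)%N)%:Z.

Lemma square_col_weight_pair (c : 'I_a) h U Hn :
  (lo c <= h <= U)%N -> (U <= a)%N -> (c == 0 :> nat) ==> (U == a) ->
  (Hn <= h)%N -> (lo c.+1 <= Hn)%N -> (c.+1 == a) ==> (Hn == lo a) ->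
  col_weight lo c h + col_weight lo c (col_step h U (maxn (lo c) Hn)) =
  square_boundary c U h - square_boundary c.+1 (col_step h U (maxn (lo c) Hn)) Hn.
Proof.
move=> /andP[_ hU] _ _ Hn_le _ _; have ca := ltn_ord c.
rewrite !col_weightE // max0n /col_step /square_boundary !subn0 !addn0 exprS.
case: ltnP => [hlt | hge].
- rewrite (gtn_eqF hlt) (gtn_eqF (_ : Hn < h.+1)%N) // !sign_oddE -!modn2.
  by case: (odd c); lia.
- have -> : U = h by apply/eqP; rewrite eqn_leq hU hge.
  by rewrite !eqxx !sign_oddE -!modn2; case: (odd c); lia.
Qed.

Lemma square_boundary_first h : (lo 0 <= h <= a)%N -> square_boundary 0 a h = (odd a)%:Z.
Proof. by rewrite /square_boundary mul1r subn0; case: eqP => // ->. Qed.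

Lemma square_boundary_last v : (v <= a)%N -> square_boundary a v (lo a) = 0.
Proof. by rewrite /square_boundary subnn; case: eqP => [->|]; rewrite /= mulr0. Qed.

End Square.

Section UpperTriangle.
Variable n : nat.
Local Notation a := n.+1.
Local Notation lo := (fun c : nat => (n - c)%N).

Definition triangle_boundary (c v w : nat) : int :=
  (-1) ^+ n * (if c == a then 1 - a%:Z
               else if v == w then (odd (v - lo c)%N)%:Z - c%:Z else 1 - c%:Z).

Lemma triangle_col_weight c h : (c < a)%N -> (lo c <= h)%N ->
  col_weight lo c h = (-1) ^+ n * (odd (h - lo c)%N)%:Z.
Proof. by move=> ca lo_h; rewrite col_weightE // subnKC // -ltnS. Qed.

Lemma triangle_col_weight_pair (c : 'I_a) h U Hn :
  (lo c <= h <= U)%N -> (U <= a)%N -> (c == 0 :> nat) ==> (U == a) ->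
  (Hn <= h)%N -> (lo c.+1 <= Hn)%N -> (c.+1 == a) ==> (Hn == lo a) ->
  col_weight lo c h + col_weight lo c (col_step h U (maxn (lo c) Hn)) =
  triangle_boundary c U h - triangle_boundary c.+1 (col_step h U (maxn (lo c) Hn)) Hn.
Proof.
move=> /andP[lo_h hU] _ _ Hn_le lo_Hn /implyP Hn_last; have ca := ltn_ord c.
have lo_step : (lo c <= col_step h U (maxn (lo c) Hn))%N.
  by rewrite /col_step; case: ifP => _; [exact: leqW | exact: leq_maxl].
rewrite !triangle_col_weight //.
rewrite /triangle_boundary /col_step (ltn_eqF ca) -!mulrBr -mulrDr; congr (_ * _).
case: ltnP => [hlt | hge].
- rewrite (gtn_eqF hlt) (gtn_eqF (_ : Hn < h.+1)%N) //.
  by rewrite -!modn2; case: eqP => ?; lia.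
- have -> : U = h by apply/eqP; rewrite eqn_leq hU hge.
  rewrite eqxx; case: eqP => [ca' | /eqP cna].
    have -> : Hn = 0%N by move/eqP: ca' => /Hn_last /eqP; lia.
    by rewrite -!modn2; move: ca'; lia.
  by rewrite -!modn2; case: eqP => ?; lia.
Qed.

Lemma triangle_boundary_first h : (lo 0 <= h <= a)%N -> triangle_boundary 0 a h = (-1) ^+ n.
Proof.
rewrite /triangle_boundary subn0 => /andP[h1 h2] /=.
by case: eqP => _; rewrite ?subSnn subr0 mulr1.
Qed.

Lemma triangle_boundary_last v : (v <= a)%N ->
  triangle_boundary a v (lo a) = (-1) ^+ n * (1 - a%:Z).
Proof. by rewrite /triangle_boundary eqxx. Qed.

End UpperTriangle.

Corollary homomesic_square n (nu : {perm 'I_n.+1}) :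
  homomesic (is_ideal (Qaa n.+1)) (comotion (Qaa n.+1) nu) (@Rstat n.+1).
Proof.
apply: (homomesic_Rstat (lo := fun=> 0%N) _ _ _ nu (@square_col_weight_pair n)
  (@square_boundary_first n) (@square_boundary_last n)) => //.
by move=> x; rewrite in_setT.
Qed.

Corollary homomesic_upper_triangle n (nu : {perm 'I_n.+1}) :
  homomesic (is_ideal (Ua n.+1)) (comotion (Ua n.+1) nu) (@Rstat n.+1).
Proof.
apply: (homomesic_Rstat (lo := fun c => (n - c)%N) _ _ _ nu (@triangle_col_weight_pair n)
  (@triangle_boundary_first n) (@triangle_boundary_last n)) => [x | c c' | c]; try lia.
by rewrite inE; move: (ltn_ord x.1); lia.
Qed.

Local Close Scope ring_scope.

Theorem mainTheorem12 (a : nat) (P : {set pt a}) (nu : {perm 'I_a}) :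
  (0 < a)%N -> (P = Qaa a \/ P = Ua a) ->
  homomesic (is_ideal P) (comotion P nu) (@Rstat a).
Proof.
case: a P nu => [//|n] P nu _ [->|->].
- exact: homomesic_square.
- exact: homomesic_upper_triangle.
Qed.
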